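(* Let $G$ be a cyclic group of order $3$ and $p \neq 2$ a prime, and let $\mathbb{Z}_{(p)} = \{ m/n : m,n \in \mathbb{Z},\ \gcd(p,n)=1\}$. Then the group ring $\mathbb{Z}_{(p)}G$ is $\Sigma$-strongly clean.
   Context: All rings are associative with identity. For a positive integer $n$, an element $x \in R$ is $n$-strongly clean if $x = e + u_1 + \cdots + u_n$ where $e^2=e$, $u_1,\dots,u_n$ are units of $R$, and $eu_i = u_i e$ for all $i$. An element of $R$ is $\Sigma$-strongly clean if it is $n$-strongly clean for some positive integer $n$; $R$ is $\Sigma$-strongly clean if every element of $R$ is $\Sigma$-strongly clean. *)

From HB Require Import structures.
From mathcomp Require Import all_boot all_order all_algebra.
Set Implicit Arguments. Unset Strict Implicit. Unset Printing Implicit Defensive.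
Import Order.TTheory GRing.Theory Num.Theory.
Local Open Scope ring_scope.

(* Z_(p) = { m/n : gcd(p,n) = 1 } as a subset of the rationals:
   a rational lies in Z_(p) iff its reduced denominator is coprime to p. *)
Definition in_Zp_loc (p : nat) (q : rat) : bool := coprime p `|denq q|%N.

(* The group ring Z_(p)G, G = <g | g^3 = 1> cyclic of order 3.
   An element a0 + a1 g + a2 g^2 is represented by the triple (a0, a1, a2)
   of rationals, constrained to lie in Z_(p). *)
Definition GR := (rat * rat * rat)%type.

Definition gr_add (x y : GR) : GR :=
  let: (a0, a1, a2) := x in let: (b0, b1, b2) := y in
  (a0 + b0, a1 + b1, a2 + b2).

Definition gr_mul (x y : GR) : GR :=
  let: (a0, a1, a2) := x in let: (b0, b1, b2) := y in
  (a0 * b0 + a1 * b2 + a2 * b1,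
   a0 * b1 + a1 * b0 + a2 * b2,
   a0 * b2 + a1 * b1 + a2 * b0).

Definition gr_zero : GR := (0, 0, 0).
Definition gr_one : GR := (1, 0, 0).

Definition in_ZpG (p : nat) (x : GR) : bool :=
  let: (a0, a1, a2) := x in [&& in_Zp_loc p a0, in_Zp_loc p a1 & in_Zp_loc p a2].

Definition gr_idem (p : nat) (e : GR) : Prop := in_ZpG p e /\ gr_mul e e = e.

Definition gr_unit (p : nat) (u : GR) : Prop :=
  in_ZpG p u /\
  exists v : GR, in_ZpG p v /\ gr_mul u v = gr_one /\ gr_mul v u = gr_one.

Definition n_strongly_clean (p n : nat) (x : GR) : Prop :=
  exists (e : GR) (us : seq GR),
    size us = n /\ gr_idem p e /\
    (forall u, u \in us -> gr_unit p u /\ gr_mul e u = gr_mul u e) /\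
    x = gr_add e (foldr gr_add gr_zero us).

Definition Sigma_strongly_clean_elt (p : nat) (x : GR) : Prop :=
  exists n : nat, (0 < n)%N /\ n_strongly_clean p n x.

Definition ZpC3_Sigma_strongly_clean (p : nat) : Prop :=
  forall x : GR, in_ZpG p x -> Sigma_strongly_clean_elt p x.

(* Every element of Z_(p)C3 is a sum of six units, hence Sigma-strongly clean
   with the trivial idempotent e = 0.

   The argument has two layers.
   - Local ring Z_(p): for an odd prime p every a in Z_(p) is a sum of two
     units.  Write a = m/n in lowest terms (so p does not divide n).  If p
     divides m, then a = 1 + (a - 1) and a - 1 = (m - n)/n is a unit; otherwise
     a = 2a + (-a), and both summands are units because p does not divide 2.
   - Group ring: a unit c of Z_(p) gives units c, c g and c g^2 of Z_(p)C3,
     with inverses c^-1, c^-1 g^2 and c^-1 g.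
   Splitting each coordinate of a0 + a1 g + a2 g^2 into two units of Z_(p)
   therefore writes it as a sum of six units of Z_(p)C3. *)
From mathcomp Require Import all_boot all_order all_algebra.
From mathcomp Require Import ring.
Import Order.TTheory GRing.Theory Num.Theory.
Local Open Scope ring_scope.

Definition loc_unit (p : nat) (c : rat) : bool :=
  [&& c != 0, in_Zp_loc p c & in_Zp_loc p c^-1].

Lemma in_Zp_loc0 (p : nat) : in_Zp_loc p 0.
Proof. by rewrite /in_Zp_loc coprimen1. Qed.

Lemma loc_unit1 (p : nat) : loc_unit p 1.
Proof. by rewrite /loc_unit invr1 /in_Zp_loc oner_eq0 coprimen1. Qed.

Section LocalRing.

Variable p : nat.
Hypothesis p_prime : prime p.

(* A fraction whose denominator is prime to p lies in Z_(p): the reduced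
   denominator divides n. *)
Lemma in_Zp_loc_frac (m n : int) :
  ~~ (p %| `|n|)%N -> in_Zp_loc p (m%:~R / n%:~R).
Proof.
move=> p_n; have n0 : n != 0 by apply: contraNneq p_n => ->; rewrite dvdn0.
rewrite /in_Zp_loc -[_ / _](fracqE (m, n)) den_fracq /= n0 absz_nat.
rewrite prime_coprime //; apply: contra p_n => p_den.
by apply: dvdn_trans p_den _; apply/dvdn_div/dvdn_gcdr.
Qed.

Lemma loc_unit_frac (m n : int) :
  ~~ (p %| `|m|)%N -> ~~ (p %| `|n|)%N -> loc_unit p (m%:~R / n%:~R).
Proof.
move=> p_m p_n.
have m0 : m%:~R != 0 :> rat by rewrite intr_eq0; apply: contraNneq p_m => ->.
have n0 : n%:~R != 0 :> rat by rewrite intr_eq0; apply: contraNneq p_n => ->.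
rewrite /loc_unit invf_div !in_Zp_loc_frac // andbT.
by rewrite mulf_neq0 // invr_eq0.
Qed.

Hypothesis p_odd : p != 2%N.

Lemma loc_sum_two_units (a : rat) :
  in_Zp_loc p a -> exists u v, [/\ loc_unit p u, loc_unit p v & a = u + v].
Proof.
move=> a_loc; have a_frac := divq_num_den a.
set m := numq a in a_frac *; set n := denq a in a_frac *.
have p_n : ~~ (p %| `|n|)%N by rewrite -prime_coprime.
have n0 : n%:~R != 0 :> rat by rewrite intr_eq0 denq_neq0.
have [p_m | p_m] := boolP (p %| `|m|)%N.
- have p_mn : ~~ (p %| `|m - n|)%N.
    apply: contra p_n => p_mn; have : (p%:Z %| m - (m - n))%Z by exact: rpredB.
    by rewrite opprB addrC subrK.
  exists 1, (a - 1); split; [exact: loc_unit1 | | ring].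
  have -> : a - 1 = (m - n)%:~R / n%:~R by rewrite -a_frac rmorphB /=; field.
  exact: loc_unit_frac.
- have p_2 : ~~ (p %| 2)%N.
    by rewrite dvdn_prime2 //; apply: contra p_odd => /eqP ->.
  exists (2 * a), (- a); split; last by ring.
    have -> : 2 * a = (2 * m)%:~R / n%:~R by rewrite -a_frac rmorphM /=; field.
    by apply: loc_unit_frac; rewrite // abszM Euclid_dvdM // negb_or p_2.
  have -> : - a = (- m)%:~R / n%:~R by rewrite -a_frac rmorphN /=; field.
  by apply: loc_unit_frac; rewrite // abszN.
Qed.

End LocalRing.

Lemma gr_unit_monomials (p : nat) (c : rat) : loc_unit p c ->
  [/\ gr_unit p (c, 0, 0), gr_unit p (0, c, 0) & gr_unit p (0, 0, c)].
Proof.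
case/and3P => c0 c_loc cV_loc; have z_loc := in_Zp_loc0 p.
split; split; rewrite /in_ZpG ?c_loc ?z_loc //.
- exists (c^-1, 0, 0); rewrite /in_ZpG cV_loc z_loc /gr_mul /gr_one.
  by do !split; congr (_, _, _); field.
- exists (0, 0, c^-1); rewrite /in_ZpG cV_loc z_loc /gr_mul /gr_one.
  by do !split; congr (_, _, _); field.
- exists (0, c^-1, 0); rewrite /in_ZpG cV_loc z_loc /gr_mul /gr_one.
  by do !split; congr (_, _, _); field.
Qed.

Lemma sum_of_units_Sigma_clean (p : nat) (us : seq GR) :
  us != [::] -> (forall u, u \in us -> gr_unit p u) ->
  Sigma_strongly_clean_elt p (foldr gr_add gr_zero us).
Proof.
move=> us_nil us_units; exists (size us); split; first by rewrite lt0n size_eq0.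
exists gr_zero, us; split=> //; split.
  split; first by rewrite /gr_zero /in_ZpG in_Zp_loc0.
  by rewrite /gr_mul /gr_zero; congr (_, _, _); ring.
split; last first.
  by case: (foldr _ _ _) => [[a0 a1] a2]; rewrite /gr_add /gr_zero !add0r.
move=> [[u0 u1] u2] u_in; split; first exact: us_units.
by rewrite /gr_mul /gr_zero; congr (_, _, _); ring.
Qed.

Theorem corollary1p15 (p : nat) (hp : prime p) (hp2 : p != 2%N) :
  ZpC3_Sigma_strongly_clean p.
Proof.
move=> [[a0 a1] a2] /and3P [a0_loc a1_loc a2_loc].
have [u0 [v0 [/gr_unit_monomials[U0 _ _] /gr_unit_monomials[V0 _ _] ->]]] :=
  @loc_sum_two_units p hp hp2 _ a0_loc.
have [u1 [v1 [/gr_unit_monomials[_ U1 _] /gr_unit_monomials[_ V1 _] ->]]] :=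
  @loc_sum_two_units p hp hp2 _ a1_loc.
have [u2 [v2 [/gr_unit_monomials[_ _ U2] /gr_unit_monomials[_ _ V2] ->]]] :=
  @loc_sum_two_units p hp hp2 _ a2_loc.
set us := [:: (u0, 0, 0); (v0, 0, 0); (0, u1, 0); (0, v1, 0); (0, 0, u2); (0, 0, v2)].
have -> : (u0 + v0, u1 + v1, u2 + v2) = foldr gr_add gr_zero us.
  by rewrite /= /gr_add /gr_zero; congr (_, _, _); ring.
apply: sum_of_units_Sigma_clean => // u.
by rewrite !inE => /or4P [/eqP->|/eqP->|/eqP->|/orP[/eqP->|/orP[/eqP->|/eqP->]]].
Qed.
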